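(* A semigroup $\langle A;\cdot\rangle$ is an Abelian algebra if and only if $\langle A;\cdot\rangle$ is stationary and for all $a,b,c,d,u,v\in A$ the equality $aub=cud$ implies $avb=cvd$.
   Context: A semigroup $\langle A;\cdot\rangle$ is called stationary if for all $u,v,b,c\in A$, $ub=uc$ implies $vb=vc$, and $bu=cu$ implies $bv=cv$. A polynomial operation of an algebra is an operation obtained from a term by substituting elements of the algebra for some of its variables. An algebra is called Abelian if for every polynomial operation $t(x,y_1,\ldots,y_n)$ and all elements $u,v,c_1,\ldots,c_n,d_1,\ldots,d_n$ of the algebra, $t(u,c_1,\ldots,c_n)=t(u,d_1,\ldots,d_n)$ implies $t(v,c_1,\ldots,c_n)=t(v,d_1,\ldots,d_n)$. (An ''Abelian semigroup'' means a semigroup that is an Abelian algebra in this sense.) *)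

(* Terms of the semigroup signature with constants from A (polynomials).
   Variables are indexed by nat; variable 0 plays the role of x, variable
   (S i) the role of y_(i+1). *)
Inductive poly (A : Type) : Type :=
| PVar : nat -> poly A
| PConst : A -> poly A
| PMul : poly A -> poly A -> poly A.

Arguments PVar {A} _.
Arguments PConst {A} _.
Arguments PMul {A} _ _.

Fixpoint peval {A : Type} (mul : A -> A -> A) (env : nat -> A) (t : poly A) : A :=
  match t with
  | PVar i => env i
  | PConst a => a
  | PMul t1 t2 => mul (peval mul env t1) (peval mul env t2)
  end.

Definition scons {A : Type} (x : A) (ys : nat -> A) : nat -> A :=
  fun i => match i with O => x | S j => ys j end.

Definition stationary {A : Type} (mul : A -> A -> A) : Prop :=
  forall u v b c : A,
    (mul u b = mul u c -> mul v b = mul v c) /\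
    (mul b u = mul c u -> mul b v = mul c v).

Definition abelian {A : Type} (mul : A -> A -> A) : Prop :=
  forall (t : poly A) (u v : A) (c d : nat -> A),
    peval mul (scons u c) t = peval mul (scons u d) t ->
    peval mul (scons v c) t = peval mul (scons v d) t.

(* Flatten a polynomial into the word of its leaves and evaluate words in the
   monoid A^1 obtained by adjoining an identity.  Replacing the occurrences of
   x by v one at a time, from left to right, each step is an instance of
   [aub = cud -> avb = cvd] in A^1, where a, b, c, d may be the identity; the
   cases with identities are exactly the two halves of stationarity. *)

From Stdlib Require Import List.
Import ListNotations.

Section Abelian.
Variable A : Type.
Variable mul : A -> A -> A.

Lemma abelian_stationary : abelian mul -> stationary mul.
Proof.
  intros H u v b c; split; intro E.
  - exact (H (PMul (PVar 0) (PVar 1)) u v (fun _ => b) (fun _ => c) E).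
  - exact (H (PMul (PVar 1) (PVar 0)) u v (fun _ => b) (fun _ => c) E).
Qed.

Lemma abelian_middle_transfer : abelian mul ->
  forall a b c d u v : A,
    mul (mul a u) b = mul (mul c u) d -> mul (mul a v) b = mul (mul c v) d.
Proof.
  intros H a b c d u v E.
  exact (H (PMul (PMul (PVar 1) (PVar 0)) (PVar 2)) u v
           (fun i => match i with 0 => a | _ => b end)
           (fun i => match i with 0 => c | _ => d end) E).
Qed.

Hypothesis mul_assoc : forall x y z : A, mul x (mul y z) = mul (mul x y) z.

(* [None] is the adjoined identity. *)
Definition omul (a b : option A) : option A :=
  match a, b with
  | None, _ => b
  | _, None => a
  | Some x, Some y => Some (mul x y)
  end.

Lemma omul_assoc a b c : omul a (omul b c) = omul (omul a b) c.
Proof. destruct a, b, c; simpl; rewrite ?mul_assoc; reflexivity. Qed.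

Definition letter_eval (env : nat -> A) (l : nat + A) : A :=
  match l with inl i => env i | inr a => a end.

Fixpoint weval (env : nat -> A) (w : list (nat + A)) : option A :=
  match w with
  | [] => None
  | l :: w => omul (Some (letter_eval env l)) (weval env w)
  end.

Lemma weval_app env w1 w2 :
  weval env (w1 ++ w2) = omul (weval env w1) (weval env w2).
Proof.
  induction w1 as [|l w1 IH]; cbn -[omul]; [reflexivity|].
  rewrite IH, omul_assoc; reflexivity.
Qed.

Lemma weval_None env w : weval env w = None <-> w = [].
Proof.
  destruct w as [|l w]; simpl; [tauto|].
  split; [|discriminate].
  destruct (weval env w); discriminate.
Qed.

Fixpoint word (t : poly A) : list (nat + A) :=
  match t with
  | PVar i => [inl i]
  | PConst a => [inr a]
  | PMul t1 t2 => word t1 ++ word t2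
  end.

Lemma weval_word env t : weval env (word t) = Some (peval mul env t).
Proof.
  induction t as [i|a|t1 IH1 t2 IH2]; cbn -[omul]; try reflexivity.
  rewrite weval_app, IH1, IH2; reflexivity.
Qed.

Hypothesis mul_stationary : stationary mul.
Hypothesis middle_transfer : forall a b c d u v : A,
  mul (mul a u) b = mul (mul c u) d -> mul (mul a v) b = mul (mul c v) d.

Lemma omul_middle_transfer u v (a b c d : option A) :
  (a = None <-> c = None) -> (b = None <-> d = None) ->
  omul (omul a (Some u)) b = omul (omul c (Some u)) d ->
  omul (omul a (Some v)) b = omul (omul c (Some v)) d.
Proof.
  intros Hac Hbd H.
  destruct a as [a|], b as [b|], c as [c|], d as [d|]; simpl in *;
    try (exfalso; intuition discriminate); try reflexivity;
    injection H as H; f_equal.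
  - exact (middle_transfer _ _ _ _ _ _ H).
  - exact (proj2 (mul_stationary u v a c) H).
  - exact (proj1 (mul_stationary u v b d) H).
Qed.

(* The prefix [w1] has already been switched from [x := u] to [x := v]. *)
Lemma weval_switch u v ys zs (w2 w1 : list (nat + A)) :
  omul (weval (scons v ys) w1) (weval (scons u ys) w2) =
  omul (weval (scons v zs) w1) (weval (scons u zs) w2) ->
  omul (weval (scons v ys) w1) (weval (scons v ys) w2) =
  omul (weval (scons v zs) w1) (weval (scons v zs) w2).
Proof.
  revert w1; induction w2 as [|l w2 IH]; intros w1 H; cbn -[omul] in *;
    [exact H|].
  rewrite !omul_assoc in H |- *.
  specialize (IH (w1 ++ [l])); rewrite !weval_app in IH; cbn -[omul] in IH.
  apply IH.
  destruct l as [[|i]|a]; cbn -[omul] in *; [|exact H..].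
  apply omul_middle_transfer with (u := u); [rewrite !weval_None; tauto.. |].
  exact H.
Qed.

Lemma stationary_middle_transfer_abelian : abelian mul.
Proof.
  intros t u v ys zs E.
  pose proof (weval_switch u v ys zs (word t) []) as K; cbn -[omul] in K.
  rewrite !weval_word in K.
  assert (Hv : Some (peval mul (scons v ys) t) = Some (peval mul (scons v zs) t))
    by (apply K; congruence).
  now injection Hv.
Qed.

End Abelian.

Theorem mainTheorem10 (A : Type) (mul : A -> A -> A)
  (assoc : forall x y z : A, mul x (mul y z) = mul (mul x y) z) :
  abelian mul <->
  (stationary mul /\
   forall a b c d u v : A,
     mul (mul a u) b = mul (mul c u) d -> mul (mul a v) b = mul (mul c v) d).
Proof.
  split.
  - intro H; split.
    + exact (abelian_stationary A mul H).
    + exact (abelian_middle_transfer A mul H).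
  - intros [st transfer].
    exact (stationary_middle_transfer_abelian A mul assoc st transfer).
Qed.
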